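(* Let $\lambda:\frac12\mathbb{N}\to\mathbb{C}$ and let $\sigma\in\Phi^0(SU_q(2))$ satisfy $\sum_{j=-l}^{l}\sigma_{i_0j}(l)=\lambda(l)$ for every $l\in\frac12\mathbb{N}$ and every $-l\le i_0\le l$. Then $\{\lambda(l)\}_{l\in\frac12\mathbb{N}}\subseteq\mathrm{spec}(T_\sigma)$, and the multiplicity of $\lambda(l)$ as an eigenvalue is at least $2l+1$.
   Context: Fix $0<q<1$. $SU_q(2)$ is the $*$-algebra generated by $a,c$ with $ac^*=qc^*a$, $ca^*=qa^*c$, $c^*a^*=qa^*c^*$, $c^*c=cc^*$, $aa^*+q^2c^*c=a^*a+c^*c=1$, with Haar state $h$. For $l\in\frac12\mathbb{N}$, $T^l=[t^l_{ij}]_{-l\le i,j\le l}$ is the irreducible unitary matrix corepresentation of dimension $2l+1$; $\{t^l_{ij}\}$ is an orthogonal basis with $h(t^l_{ij}(t^l_{ij})^* )=[2l+1]_q^{-1}q^{2j}$, $[x]_q=\frac{q^x-q^{-x}}{q-q^{-1}}$. Fourier transform: $\hat f(l)_{mn}=h(f(t^l_{nm})^* )$. $Tr_q(M)=Tr(D_qM)$, $D_q=\mathrm{diag}(q^{-2i})_{-l\le i\le l}$. A symbol is a map $\sigma:\frac12\mathbb{N}\to\bigcup_lM_{2l+1}(\mathbb{C})\otimes SU_q(2)$ (matrix entries $\sigma_{ij}(l)$, $-l\le i,j\le l$), with operator $T_\sigma f=\sum_l[2l+1]_qTr_q(\sigma(l)\hat f(l)T^l)$. With $I_{2l+1}=\{-l,\dots,l\}$: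 $\sigma$ is homogeneous of Fourier order $m\in\frac12\mathbb{N}$ if for each $l$ there is $\psi_\sigma(l):I_{2l+1}^2\to I_{2l+1}^2$ with $\sigma(l)_{ij}\in\mathrm{Span}\{t^m_{\psi_\sigma(l)(i,j)}\}$ and $\sigma(l)_{ij}=0$ when $\psi_\sigma(l)(i,j)\notin I_{2m+1}^2$; $\Phi^m(SU_q(2))$ consists of finite linear combinations of such symbols; in particular symbols in $\Phi^0$ have complex entries. *)

From HB Require Import structures.
From mathcomp Require Import all_boot all_order all_algebra.
Set Implicit Arguments. Unset Strict Implicit. Unset Printing Implicit Defensive.
Import Order.TTheory GRing.Theory Num.Theory.
Local Open Scope ring_scope.

Section SUq2.
Variables (C : numClosedFieldType) (q : C).

(* Conventions: l in 1/2 N is encoded by n = 2l : nat; an index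
   -l <= i <= l is encoded by k : 'I_n.+1 with i = k - n/2, so 2i = 2k - n. *)

Definition qint (m : nat) : C := (q ^+ m - q ^- m) / (q - q^-1).

Definition twice_idx (n : nat) (k : 'I_n.+1) : int := Posz (2 * k)%N - Posz n.

Definition lin_fun (V : lmodType C) (phi : V -> C) :=
  forall k x y, phi (k *: x + y) = k * phi x + phi y.

Definition lin_map (V W : lmodType C) (f : V -> W) :=
  forall k x y, f (k *: x + y) = k *: f x + f y.

Inductive generated (A : algType C) (star : A -> A) (a c : A) : A -> Prop :=
| gen_a : generated star a c a
| gen_c : generated star a c c
| gen_as : generated star a c (star a)
| gen_cs : generated star a c (star c)
| gen_1 : generated star a c 1
| gen_add x y : generated star a c x -> generated star a c y -> generated star a c (x + y)
| gen_scale k x : generated star a c x -> generated star a c (k *: x)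
| gen_mul x y : generated star a c x -> generated star a c y -> generated star a c (x * y).

(* A model of SU_q(2): the *-algebra A generated by a, c with the defining
   relations, its Haar state h, the matrix coefficients t^l_{ij} of the
   irreducible unitary corepresentations T^l, and the comultiplication
   (into an algebra B playing the role of A (x) A, with slice maps). *)
Record SUq2_model (A : algType C) : Type := SUq2Model {
  star : A -> A;
  ga : A;
  gc : A;
  haar : A -> C;
  tc : forall n : nat, 'I_n.+1 -> 'I_n.+1 -> A;
  B : algType C;
  tens : A -> A -> B;
  coprod : A -> B;
  slL : (A -> C) -> B -> A;
  slR : (A -> C) -> B -> A;
  star_add : forall x y, star (x + y) = star x + star y;
  star_scale : forall k x, star (k *: x) = k^* *: star x;
  star_mul : forall x y, star (x * y) = star y * star x;
  star_invol : forall x, star (star x) = x;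
  rel1 : ga * star gc = q *: (star gc * ga);
  rel2 : gc * star ga = q *: (star ga * gc);
  rel3 : star gc * star ga = q *: (star ga * star gc);
  rel4 : star gc * gc = gc * star gc;
  rel5 : ga * star ga + q ^+ 2 *: (star gc * gc) = 1;
  rel6 : star ga * ga + star gc * gc = 1;
  generated_all : forall x, generated star ga gc x;
  haar_lin : lin_fun haar;
  haar_1 : haar 1 = 1;
  haar_pos : forall x, 0 <= haar (star x * x);
  tens_linl : forall y, lin_map (fun x => tens x y);
  tens_linr : forall x, lin_map (tens x);
  tens_mul : forall x y x' y', tens (x * x') (y * y') = tens x y * tens x' y';
  tens_1 : tens 1 1 = 1;
  slL_spec : forall phi, lin_fun phi ->
     lin_map (slL phi) /\ forall x y, slL phi (tens x y) = phi x *: y;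
  slR_spec : forall phi, lin_fun phi ->
     lin_map (slR phi) /\ forall x y, slR phi (tens x y) = phi y *: x;
  coprod_lin : lin_map coprod;
  coprod_mul : forall x y, coprod (x * y) = coprod x * coprod y;
  coprod_1 : coprod 1 = 1;
  haar_invL : forall x, slL haar (coprod x) = haar x *: 1;
  haar_invR : forall x, slR haar (coprod x) = haar x *: 1;
  t_corep : forall n (i j : 'I_n.+1),
     coprod (tc i j) = \sum_(k < n.+1) tens (tc i k) (tc k j);
  t_unitary1 : forall n (i j : 'I_n.+1),
     \sum_(k < n.+1) tc i k * star (tc j k) = (i == j)%:R;
  t_unitary2 : forall n (i j : 'I_n.+1),
     \sum_(k < n.+1) star (tc k i) * tc k j = (i == j)%:R;
  t_zero : tc (n := 0) ord0 ord0 = 1;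
  t_half : [/\ tc (n := 1) ord0 ord0 = ga, tc (n := 1) ord0 ord_max = - (q *: star gc),
               tc (n := 1) ord_max ord0 = gc & tc (n := 1) ord_max ord_max = star ga];
  t_span : forall f, exists N (co : forall n : nat, 'I_n.+1 -> 'I_n.+1 -> C),
     f = \sum_(n < N) \sum_(i < n.+1) \sum_(j < n.+1) co n i j *: tc i j;
  t_orth : forall n n' (i j : 'I_n.+1) (i' j' : 'I_n'.+1),
     haar (tc i j * star (tc i' j')) =
       if [&& n == n', val i == val i' & val j == val j']
       then (qint n.+1)^-1 * q ^ twice_idx j else 0
}.

Variables (A : algType C) (M : SUq2_model A).

Definition fhat (f : A) (n : nat) : 'M[C]_n.+1 :=
  \matrix_(r, s) haar M (f * star M (tc M s r)).

(* [2l+1]_q Tr_q(S T^l) for a complex matrix S, where Tr_q(X) = Tr(D_q X),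
   D_q = diag(q^{-2i}) *)
Definition qtrace_T (n : nat) (S : 'M[C]_n.+1) : A :=
  qint n.+1 *: \sum_(i < n.+1) q ^ (- twice_idx i) *:
                 \sum_(k < n.+1) S i k *: tc M k i.

Definition symbol0 := forall n : nat, 'M[C]_n.+1.

(* g = T_sigma f, where T_sigma f = sum_l [2l+1]_q Tr_q(sigma(l) hat f(l) T^l);
   the sum has finitely many nonzero terms. *)
Definition Tsigma_is (sigma : symbol0) (f g : A) : Prop :=
  exists N : nat, (forall m, (N <= m)%N -> fhat f m = 0) /\
    g = \sum_(m < N) qtrace_T (sigma m *m fhat f m).

Definition is_eigenvalue (sigma : symbol0) (lam : C) : Prop :=
  exists f : A, f != 0 /\ Tsigma_is sigma f (lam *: f).

Definition lin_indep (m : nat) (v : 'I_m -> A) : Prop :=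
  forall co : 'I_m -> C, \sum_(k < m) co k *: v k = 0 -> forall k, co k = 0.

End SUq2.

From HB Require Import structures.
From mathcomp Require Import all_boot all_order all_algebra.
Import Order.TTheory GRing.Theory Num.Theory.
Local Open Scope ring_scope.

(* For a symbol of order 0 the operator T_sigma acts on the span of the n-th
   matrix coefficients through the matrix sigma(n).  Take the rows of T^n
   weighted by D_q, v_a = sum_b q^(-2b) t^n_ab: by Schur orthogonality their
   Fourier transform is supported in degree n, where every row equals
   [n+1]_q^-1 e_a.  Multiplying by sigma(n) only scales this by the common row
   sum lam(n), so T_sigma v_a = lam(n) v_a; the same orthogonality relations
   show that the n+1 vectors v_a are linearly independent. *)

Set Implicit Arguments.
Unset Strict Implicit.
Unset Printing Implicit Defensive.

Lemma mulmx_const_row_sums (R : comPzRingType) n (S : 'M[R]_n.+1) (lam c : R)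
    (a : 'I_n.+1) :
  (forall i, \sum_(j < n.+1) S i j = lam) ->
  S *m \matrix_(r, s) ((s == a)%:R * c) = \matrix_(r, s) ((s == a)%:R * (lam * c)).
Proof.
move=> row_sums; apply/matrixP => i s; rewrite !mxE.
under eq_bigr do rewrite mxE mulrCA.
by rewrite -mulr_sumr -big_distrl /= row_sums.
Qed.

Section LinearForms.
Variable C : numClosedFieldType.

Lemma lin_fun0 (V : lmodType C) (phi : V -> C) : lin_fun phi -> phi 0 = 0.
Proof.
move=> phi_lin; have := phi_lin 1 0 0; rewrite scale1r addr0 mul1r.
by move/(congr1 (fun x => x - phi 0)); rewrite addrK subrr.
Qed.

Lemma lin_funD (V : lmodType C) (phi : V -> C) : lin_fun phi ->
  forall x y, phi (x + y) = phi x + phi y.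
Proof. by move=> phi_lin x y; have := phi_lin 1 x y; rewrite scale1r mul1r. Qed.

Lemma lin_funZ (V : lmodType C) (phi : V -> C) : lin_fun phi ->
  forall k x, phi (k *: x) = k * phi x.
Proof.
by move=> phi_lin k x; have := phi_lin k x 0; rewrite addr0 (lin_fun0 phi_lin) addr0.
Qed.

Lemma lin_fun_sum (V : lmodType C) (phi : V -> C) : lin_fun phi ->
  forall m (F : 'I_m -> V), phi (\sum_(i < m) F i) = \sum_(i < m) phi (F i).
Proof.
move=> phi_lin m F; elim/big_rec2: _ => [|i y1 y2 _ <-]; first exact: lin_fun0.
exact: lin_funD.
Qed.

Lemma lin_indep_neq0 (A : algType C) m (v : 'I_m -> A) :
  lin_indep v -> forall k, v k != 0.
Proof.
move=> v_indep k; apply/eqP => vk0.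
have delta_sum0 : \sum_(a < m) (a == k)%:R *: v a = 0.
  rewrite (bigD1 k) //= vk0 scaler0 add0r big1 // => a /negbTE ->.
  exact: scale0r.
by have := v_indep _ delta_sum0 k; rewrite eqxx => /eqP; rewrite oner_eq0.
Qed.

Lemma qint_neq0 (q : C) : 0 < q < 1 -> forall m, (0 < m)%N -> qint q m != 0.
Proof.
case/andP=> q_gt0 q_lt1.
have qX_neq : forall m, (0 < m)%N -> q ^+ m - q ^- m != 0.
  move=> m m_gt0; rewrite subr_eq0 lt_eqF //.
  have qX_lt1 : q ^+ m < 1 by rewrite exprn_ilt1 ?ltW // -lt0n.
  by apply: (lt_trans qX_lt1); rewrite invf_gt1 // exprn_gt0.
move=> m m_gt0; rewrite /qint mulf_neq0 ?invr_eq0 ?qX_neq //.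
by have := qX_neq 1%N isT; rewrite expr1.
Qed.

End LinearForms.

Section WeightedRows.
Variables (C : numClosedFieldType) (q : C) (A : algType C) (M : SUq2_model q A).
Hypothesis q_range : 0 < q < 1.

Let q_neq0 : q != 0.
Proof. by case/andP: q_range => q_gt0 _; rewrite gt_eqF. Qed.

Let qint_succ_neq0 n : qint q n.+1 != 0.
Proof. exact: qint_neq0. Qed.

Definition qrow n (a : 'I_n.+1) : A :=
  \sum_(b < n.+1) q ^ (- twice_idx b) *: tc M a b.

Lemma haar_mulr_lin (g : A) : lin_fun (fun x : A => haar M (x * g)).
Proof. by move=> k x y; rewrite mulrDl -scalerAl (haar_lin M). Qed.

Lemma haar_qrow_tc n (a : 'I_n.+1) m (s r : 'I_m.+1) :
  haar M (qrow a * star M (tc M s r)) =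
  if (n == m) && (val a == val s) then (qint q n.+1)^-1 else 0.
Proof.
rewrite /qrow (lin_fun_sum (haar_mulr_lin _)).
under eq_bigr do rewrite -scalerAl (lin_funZ (haar_lin M)) (t_orth M).
have [n_eq_m|_] /= := eqVneq n m; last by rewrite big1 // => b _; rewrite mulr0.
subst m.
have [_ /=|_] := eqVneq (val a) (val s); last by rewrite big1 // => b _; rewrite mulr0.
rewrite (bigD1 r) //= eqxx mulrCA -expfzDr // addNr expr0z mulr1.
by rewrite big1 ?addr0 // => b /negbTE b_neq_r; rewrite val_eqE b_neq_r mulr0.
Qed.

Lemma fhat_qrow_neq n (a : 'I_n.+1) m : m != n -> fhat M (qrow a) m = 0.
Proof.
by move=> m_neq_n; apply/matrixP => r s; rewrite !mxE haar_qrow_tc eq_sym (negbTE m_neq_n).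
Qed.

Lemma fhat_qrow n (a : 'I_n.+1) :
  fhat M (qrow a) n = \matrix_(r, s) ((s == a)%:R * (qint q n.+1)^-1).
Proof.
apply/matrixP => r s; rewrite !mxE haar_qrow_tc eqxx /= val_eqE eq_sym.
by case: (s == a); rewrite ?mul1r ?mul0r.
Qed.

Lemma qtrace_T0 n : qtrace_T M (0 : 'M_n.+1) = 0.
Proof.
rewrite /qtrace_T big1 ?scaler0 // => i _.
by rewrite big1 ?scaler0 // => k _; rewrite mxE scale0r.
Qed.

Lemma qtrace_T_col n (a : 'I_n.+1) (x : C) :
  qtrace_T M (\matrix_(i, k) ((k == a)%:R * x)) = (qint q n.+1 * x) *: qrow a.
Proof.
rewrite /qtrace_T /qrow -scalerA; congr (_ *: _).
rewrite scaler_sumr; apply: eq_bigr => i _.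
rewrite (bigD1 a) //= big1 ?addr0 => [|k /negbTE k_neq_a]; last first.
  by rewrite mxE k_neq_a mul0r scale0r.
by rewrite mxE eqxx mul1r !scalerA mulrC.
Qed.

Lemma Tsigma_is_supported (sigma : symbol0 C) (f : A) n :
  (forall m, m != n -> fhat M f m = 0) ->
  Tsigma_is M sigma f (qtrace_T M (sigma n *m fhat M f n)).
Proof.
move=> f_supp; exists n.+1; split.
  by move=> m m_gt_n; apply: f_supp; rewrite neq_ltn m_gt_n orbT.
rewrite big_ord_recr /= big1 ?add0r // => m _.
by rewrite f_supp ?neq_ltn ?ltn_ord // mulmx0 qtrace_T0.
Qed.

Lemma Tsigma_qrow (sigma : symbol0 C) (lam : nat -> C) n (a : 'I_n.+1) :
  (forall i, \sum_(j < n.+1) sigma n i j = lam n) ->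
  Tsigma_is M sigma (qrow a) (lam n *: qrow a).
Proof.
move=> row_sums; have := Tsigma_is_supported sigma (fhat_qrow_neq a).
rewrite fhat_qrow (mulmx_const_row_sums _ _ row_sums) qtrace_T_col.
by rewrite mulrCA mulfV // mulr1.
Qed.

Lemma qrow_indep n : lin_indep (@qrow n).
Proof.
move=> co co_sum0 k.
have := congr1 (fun x => haar M (x * star M (tc M k k))) co_sum0.
rewrite /= (lin_fun0 (haar_mulr_lin _)) (lin_fun_sum (haar_mulr_lin _)).
under eq_bigr do rewrite (lin_funZ (haar_mulr_lin _)) /= haar_qrow_tc eqxx /= val_eqE.
rewrite (bigD1 k) //= eqxx big1 => [|a /negbTE ->]; last exact: mulr0.
by move/eqP; rewrite addr0 mulf_eq0 invr_eq0 (negbTE (qint_succ_neq0 n)) orbF => /eqP.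
Qed.

End WeightedRows.

Theorem mainTheorem9 (C : numClosedFieldType) (q : C) (hq : 0 < q < 1)
    (A : algType C) (M : SUq2_model q A) (lam : nat -> C) (sigma : symbol0 C)
    (hrow : forall (n : nat) (i0 : 'I_n.+1), \sum_(j < n.+1) sigma n i0 j = lam n) :
  forall n : nat,
    is_eigenvalue M sigma (lam n) /\
    exists v : 'I_n.+1 -> A,
      lin_indep v /\ forall k, Tsigma_is M sigma (v k) (lam n *: v k).
Proof.
move=> n; have eigen_qrow k := Tsigma_qrow M hq k (hrow n).
have qrow_free : lin_indep (qrow M (n := n)) by exact: qrow_indep.
split; last by exists (qrow M (n := n)).
by exists (qrow M (ord0 : 'I_n.+1)); split; [exact: lin_indep_neq0 | exact: eigen_qrow].
Qed.
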